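(* Let $I$ be a real closed interval and let $[a,b]$ be a closed subinterval of $I$. A standard function $F\colon I^*\to\mathbb{R}$ satisfies: $F$ is preassociative and unarily quasi-range-idempotent, there exists a continuous and strictly increasing function $f\colon[a,b]\to\mathbb{R}$ such that $F_1(x)=f(\mathrm{med}(a,x,b))$ for all $x\in I$, and $F_2$ is continuous, symmetric, nondecreasing in each argument and satisfies $F_2(x,x)=F_1(x)$ for every $x\in I$, if and only if there exist $c\in[a,b]$ and a continuous and strictly increasing function $f\colon[a,b]\to\mathbb{R}$ such that $$F_n(x_1,\ldots,x_n)=f\Big(\mathrm{med}\Big(a,\,\mathrm{med}\Big(\min_{1\leqslant i\leqslant n} x_i,\,c,\,\max_{1\leqslant i\leqslant n} x_i\Big),\,b\Big)\Big),\qquad n\geqslant 1.$$ In this case $f=F_1|_{[a,b]}$.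
   Context: $I^*=\bigcup_{n\geqslant 0}I^n$ is the set of finite tuples over $I$, $I^0=\{\varepsilon\}$ with $\varepsilon$ the empty tuple; $F(\mathbf{x},\mathbf{y})$ denotes $F$ applied to the concatenation, concatenation with $\varepsilon$ leaving tuples unchanged. $F_n=F|_{I^n}$, $F^{\flat}=F|_{I^*\setminus\{\varepsilon\}}$. $F$ is standard if $F(\mathbf{x})=F(\varepsilon)$ only for $\mathbf{x}=\varepsilon$. $F$ is preassociative if for all tuples $\mathbf{x},\mathbf{y},\mathbf{y}',\mathbf{z}$, $F(\mathbf{y})=F(\mathbf{y}')$ implies $F(\mathbf{x},\mathbf{y},\mathbf{z})=F(\mathbf{x},\mathbf{y}',\mathbf{z})$. $F$ is unarily quasi-range-idempotent if $\mathrm{ran}(F_1)=\mathrm{ran}(F^{\flat})$. $\mathrm{med}(x,y,z)$ denotes the median of three reals. *)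

From Stdlib Require Import Reals Lra List.
Import ListNotations.
Open Scope R_scope.

Definition med (x y z : R) : R := Rmax (Rmin x y) (Rmin (Rmax x y) z).

Definition inI (p q x : R) : Prop := p <= x <= q.

Definition tupI (p q : R) (l : list R) : Prop := Forall (inI p q) l.

Definition lmin (x0 : R) (xs : list R) : R := fold_left Rmin xs x0.
Definition lmax (x0 : R) (xs : list R) : R := fold_left Rmax xs x0.

Definition standard (p q : R) (F : list R -> R) : Prop :=
  forall x, tupI p q x -> F x = F [] -> x = [].

Definition preassociative (p q : R) (F : list R -> R) : Prop :=
  forall x y y' z, tupI p q x -> tupI p q y -> tupI p q y' -> tupI p q z ->
    F y = F y' -> F (x ++ y ++ z) = F (x ++ y' ++ z).

Definition unarily_qri (p q : R) (F : list R -> R) : Prop :=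
  forall v, (exists x, inI p q x /\ F [x] = v) <->
            (exists l, tupI p q l /\ l <> [] /\ F l = v).

Definition cont_on (a b : R) (f : R -> R) : Prop :=
  forall x, inI a b x -> forall eps, 0 < eps -> exists delta, 0 < delta /\
    forall y, inI a b y -> Rabs (y - x) < delta -> Rabs (f y - f x) < eps.

Definition strict_incr_on (a b : R) (f : R -> R) : Prop :=
  forall x y, inI a b x -> inI a b y -> x < y -> f x < f y.

Definition F2_cont (p q : R) (F : list R -> R) : Prop :=
  forall x1 x2, inI p q x1 -> inI p q x2 -> forall eps, 0 < eps ->
    exists delta, 0 < delta /\ forall y1 y2, inI p q y1 -> inI p q y2 ->
      Rabs (y1 - x1) < delta -> Rabs (y2 - x2) < delta ->
      Rabs (F [y1; y2] - F [x1; x2]) < eps.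

Definition F2_symmetric (p q : R) (F : list R -> R) : Prop :=
  forall x y, inI p q x -> inI p q y -> F [x; y] = F [y; x].

Definition F2_nondecr (p q : R) (F : list R -> R) : Prop :=
  (forall x x' y, inI p q x -> inI p q x' -> inI p q y -> x <= x' ->
     F [x; y] <= F [x'; y]) /\
  (forall x y y', inI p q x -> inI p q y -> inI p q y' -> y <= y' ->
     F [x; y] <= F [x; y']).

Definition med_repr (p q a b : R) (F : list R -> R) (c : R) (f : R -> R) : Prop :=
  inI a b c /\ cont_on a b f /\ strict_incr_on a b f /\
  forall x0 xs, tupI p q (x0 :: xs) ->
    F (x0 :: xs) = f (med a (med (lmin x0 xs) c (lmax x0 xs)) b).

From Stdlib Require Import Reals Lra List.
Import ListNotations.
Open Scope R_scope.

(* F is determined by its binary part F_2(x, y) = f(med(a, med(x, c, y), b)), and since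
   med(min, c, max) only sees the extremes of a tuple, preassociativity and the other
   conditions follow from the representation.  Conversely, unary quasi-range-idempotence
   yields c in [a, b] with F(c) = F(a, b); preassociativity gives F(a, c) = F(c) = F(c, b).
   By continuity of F_2 and the intermediate value theorem, F(a, y) = F(y) on [a, c] and
   F(x, b) = F(x) on [c, b], so monotonicity squeezes F(x, y) to F(med(x, c, y)) on [a, b];
   the clamping F(x) = F(med(a, x, b)) extends this to I, and preassociativity reduces a
   tuple of length n + 1 to one of length n by merging its first two entries. *)

Ltac no_minmax x := lazymatch x with
  | context [Rmin _ _] => fail | context [Rmax _ _] => fail | _ => idtac end.

Ltac split_minmax := match goal with
  | |- context [Rmin ?x ?y] => no_minmax x; no_minmax y; destruct (Rle_dec x y);
       [ rewrite (Rmin_left x y) in * by lra | rewrite (Rmin_right x y) in * by lra ]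
  | |- context [Rmax ?x ?y] => no_minmax x; no_minmax y; destruct (Rle_dec x y);
       [ rewrite (Rmax_right x y) in * by lra | rewrite (Rmax_left x y) in * by lra ]
  | H : context [Rmin ?x ?y] |- _ => no_minmax x; no_minmax y; destruct (Rle_dec x y);
       [ rewrite (Rmin_left x y) in * by lra | rewrite (Rmin_right x y) in * by lra ]
  | H : context [Rmax ?x ?y] |- _ => no_minmax x; no_minmax y; destruct (Rle_dec x y);
       [ rewrite (Rmax_right x y) in * by lra | rewrite (Rmax_left x y) in * by lra ]
  end; try (exfalso; lra).

Ltac minmax := intros; unfold med, inI in *; repeat split_minmax; try lra.

Ltac bounds := unfold inI in *; lra.

Lemma med_xx x c : med x c x = x.
Proof. minmax. Qed.

Lemma med_sym x c y : med x c y = med y c x.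
Proof. minmax. Qed.

Lemma med_min_max x c y : med (Rmin x y) c (Rmax x y) = med x c y.
Proof. minmax. Qed.

Lemma med_in a b x : inI a b x -> med a x b = x.
Proof. minmax. Qed.

Lemma inI_med_clamp a b x : a <= b -> inI a b (med a x b).
Proof. minmax. Qed.

Lemma inI_med p q x y z : inI p q x -> inI p q y -> inI p q z -> inI p q (med x y z).
Proof. minmax. Qed.

Lemma med_le_compat x y z x' y' z' :
  x <= x' -> y <= y' -> z <= z' -> med x y z <= med x' y' z'.
Proof. minmax. Qed.

Lemma med_right x c y : x <= y <= c -> med x c y = y.
Proof. minmax. Qed.

Lemma med_left x c y : c <= x <= y -> med x c y = x.
Proof. minmax. Qed.

Lemma med_mid x c y : x <= c <= y -> med x c y = c.
Proof. minmax. Qed.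

Lemma med_clamp_args a b c x y : inI a b c ->
  med a (med x c y) b = med a (med (med a x b) c (med a y b)) b.
Proof. minmax. Qed.

Lemma med_hull_absorb x y c mu nu :
  med (Rmin (med x c y) mu) c (Rmax (med x c y) nu) =
  med (Rmin (Rmin x y) mu) c (Rmax (Rmax x y) nu).
Proof. minmax. Qed.

Lemma med_hull_congr_l a b c m M m' M' u : inI a b c ->
  m <= M -> m' <= M' ->
  med a (med m c M) b = med a (med m' c M') b ->
  med a (med (Rmin u m) c M) b = med a (med (Rmin u m') c M') b.
Proof. minmax. Qed.

Lemma med_hull_congr_r a b c m M m' M' v : inI a b c ->
  m <= M -> m' <= M' ->
  med a (med m c M) b = med a (med m' c M') b ->
  med a (med m c (Rmax v M)) b = med a (med m' c (Rmax v M')) b.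
Proof. minmax. Qed.

Lemma Rmin_dist_lt x y x' y' d :
  Rabs (x - x') < d -> Rabs (y - y') < d -> Rabs (Rmin x y - Rmin x' y') < d.
Proof. intros Hx%Rabs_def2 Hy%Rabs_def2. apply Rabs_def1; minmax. Qed.

Lemma Rmax_dist_lt x y x' y' d :
  Rabs (x - x') < d -> Rabs (y - y') < d -> Rabs (Rmax x y - Rmax x' y') < d.
Proof. intros Hx%Rabs_def2 Hy%Rabs_def2. apply Rabs_def1; minmax. Qed.

Lemma med_dist_lt x y z x' y' z' d :
  Rabs (x - x') < d -> Rabs (y - y') < d -> Rabs (z - z') < d ->
  Rabs (med x y z - med x' y' z') < d.
Proof. intros. unfold med. auto using Rmin_dist_lt, Rmax_dist_lt. Qed.

Lemma fold_left_Rmin_min l u v : fold_left Rmin l (Rmin u v) = Rmin u (fold_left Rmin l v).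
Proof.
  revert v; induction l as [|x l IH]; intros v; simpl; [reflexivity|].
  rewrite <- Rmin_assoc; apply IH.
Qed.

Lemma fold_left_Rmax_max l u v : fold_left Rmax l (Rmax u v) = Rmax u (fold_left Rmax l v).
Proof.
  revert v; induction l as [|x l IH]; intros v; simpl; [reflexivity|].
  rewrite <- Rmax_assoc; apply IH.
Qed.

Lemma lmin_cons u y ys : lmin u (y :: ys) = Rmin u (lmin y ys).
Proof. apply fold_left_Rmin_min. Qed.

Lemma lmax_cons u y ys : lmax u (y :: ys) = Rmax u (lmax y ys).
Proof. apply fold_left_Rmax_max. Qed.

(* [0] on the empty tuple is a junk value. *)
Definition tmin (l : list R) : R := match l with [] => 0 | x0 :: xs => lmin x0 xs end.
Definition tmax (l : list R) : R := match l with [] => 0 | x0 :: xs => lmax x0 xs end.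

Lemma tmin_In l : l <> [] -> In (tmin l) l.
Proof.
  destruct l as [|x0 xs]; [contradiction|]; intros _; simpl.
  revert x0; induction xs as [|y ys IH]; intros x0; [now left|].
  rewrite lmin_cons; apply Rmin_case; [now left | right; apply IH].
Qed.

Lemma tmax_In l : l <> [] -> In (tmax l) l.
Proof.
  destruct l as [|x0 xs]; [contradiction|]; intros _; simpl.
  revert x0; induction xs as [|y ys IH]; intros x0; [now left|].
  rewrite lmax_cons; apply Rmax_case; [now left | right; apply IH].
Qed.

Lemma tmin_le l z : In z l -> tmin l <= z.
Proof.
  destruct l as [|x0 xs]; [contradiction|]; simpl.
  revert x0; induction xs as [|y ys IH]; intros x0 [<-|Hz].
  - unfold lmin; simpl; lra.
  - contradiction.
  - rewrite lmin_cons; apply Rmin_l.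
  - rewrite lmin_cons; eapply Rle_trans; [apply Rmin_r | now apply IH].
Qed.

Lemma tmax_ge l z : In z l -> z <= tmax l.
Proof.
  destruct l as [|x0 xs]; [contradiction|]; simpl.
  revert x0; induction xs as [|y ys IH]; intros x0 [<-|Hz].
  - unfold lmax; simpl; lra.
  - contradiction.
  - rewrite lmax_cons; apply Rmax_l.
  - rewrite lmax_cons; apply Rle_trans with (lmax y ys); [now apply IH | apply Rmax_r].
Qed.

Lemma tmin_le_tmax l : l <> [] -> tmin l <= tmax l.
Proof. intros Hl; apply tmin_le, tmax_In, Hl. Qed.

Lemma tmin_unique l m : In m l -> (forall z, In z l -> m <= z) -> tmin l = m.
Proof.
  intros Hm Hlow; apply Rle_antisym; [now apply tmin_le |].
  apply Hlow, tmin_In; intros ->; contradiction.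
Qed.

Lemma tmax_unique l m : In m l -> (forall z, In z l -> z <= m) -> tmax l = m.
Proof.
  intros Hm Hup; apply Rle_antisym; [| now apply tmax_ge].
  apply Hup, tmax_In; intros ->; contradiction.
Qed.

Lemma tmin_app_mid x y z : y <> [] -> x ++ z <> [] ->
  tmin (x ++ y ++ z) = Rmin (tmin (x ++ z)) (tmin y).
Proof.
  intros Hy Hxz; apply tmin_unique.
  - apply Rmin_case.
    + apply tmin_In in Hxz; rewrite in_app_iff in *; rewrite in_app_iff; tauto.
    + apply tmin_In in Hy; rewrite !in_app_iff; tauto.
  - intros w Hw; rewrite !in_app_iff in Hw.
    destruct Hw as [Hw|[Hw|Hw]].
    + eapply Rle_trans; [apply Rmin_l | apply tmin_le, in_app_iff; tauto].
    + eapply Rle_trans; [apply Rmin_r | now apply tmin_le].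
    + eapply Rle_trans; [apply Rmin_l | apply tmin_le, in_app_iff; tauto].
Qed.

Lemma tmax_app_mid x y z : y <> [] -> x ++ z <> [] ->
  tmax (x ++ y ++ z) = Rmax (tmax (x ++ z)) (tmax y).
Proof.
  intros Hy Hxz; apply tmax_unique.
  - apply Rmax_case.
    + apply tmax_In in Hxz; rewrite in_app_iff in *; rewrite in_app_iff; tauto.
    + apply tmax_In in Hy; rewrite !in_app_iff; tauto.
  - intros w Hw; rewrite !in_app_iff in Hw.
    destruct Hw as [Hw|[Hw|Hw]].
    + apply Rle_trans with (tmax (x ++ z)); [apply tmax_ge, in_app_iff; tauto | apply Rmax_l].
    + apply Rle_trans with (tmax y); [now apply tmax_ge | apply Rmax_r].
    + apply Rle_trans with (tmax (x ++ z)); [apply tmax_ge, in_app_iff; tauto | apply Rmax_l].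
Qed.

Lemma inI_tmin p q l : tupI p q l -> l <> [] -> inI p q (tmin l).
Proof. intros Hl Hne; exact (proj1 (Forall_forall _ _) Hl _ (tmin_In l Hne)). Qed.

Lemma inI_tmax p q l : tupI p q l -> l <> [] -> inI p q (tmax l).
Proof. intros Hl Hne; exact (proj1 (Forall_forall _ _) Hl _ (tmax_In l Hne)). Qed.

Lemma inI_widen p q a b x : p <= a -> b <= q -> inI a b x -> inI p q x.
Proof. unfold inI; lra. Qed.

Lemma tupI_1 p q x : inI p q x -> tupI p q [x].
Proof. intros; unfold tupI; auto. Qed.

Lemma tupI_2 p q x y : inI p q x -> inI p q y -> tupI p q [x; y].
Proof. intros; unfold tupI; auto. Qed.

Lemma tupI_app p q l1 l2 : tupI p q l1 -> tupI p q l2 -> tupI p q (l1 ++ l2).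
Proof. intros; apply Forall_app; split; assumption. Qed.

Lemma strict_incr_le a b f u v : strict_incr_on a b f ->
  inI a b u -> inI a b v -> u <= v -> f u <= f v.
Proof.
  intros Hf hu hv [Huv|<-]; [left; now apply Hf | apply Rle_refl].
Qed.

Lemma strict_incr_inj a b f u v : strict_incr_on a b f ->
  inI a b u -> inI a b v -> f u = f v -> u = v.
Proof.
  intros Hf hu hv e; destruct (Rtotal_order u v) as [h|[h|h]]; [| exact h |].
  - specialize (Hf u v hu hv h); lra.
  - specialize (Hf v u hv hu h); lra.
Qed.

(* [s |-> g (med l s r)] is continuous on all of R, so Stdlib's IVT applies to it. *)
Lemma ivt_on l r g v : l <= r -> cont_on l r g -> g l <= v <= g r ->
  exists s, inI l r s /\ g s = v.
Proof.
  intros Hlr Hg [Hl Hr].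
  destruct (Req_dec (g l) v) as [E|E]; [exists l; split; [red; lra | exact E]|].
  destruct (Req_dec (g r) v) as [E'|E']; [exists r; split; [red; lra | exact E']|].
  assert (Hlt : l < r) by (destruct (Req_dec l r); [subst; lra | lra]).
  set (h := fun s => g (med l s r) - v).
  assert (Hh : continuity h).
  { intros x eps Heps.
    destruct (Hg (med l x r) (inI_med_clamp l r x Hlr) eps Heps) as [d [Hd Hgd]].
    exists d; split; [exact Hd|]; intros x' [_ Hx']; simpl in *; unfold Rdist in *.
    unfold h; replace (g (med l x' r) - v - (g (med l x r) - v))
      with (g (med l x' r) - g (med l x r)) by ring.
    apply Hgd; [now apply inI_med_clamp |].
    apply med_dist_lt; [| exact Hx' |]; rewrite Rminus_diag, Rabs_R0; exact Hd. }
  destruct (IVT h l r Hh Hlt) as [z [Hz Hz0]];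
    [unfold h; rewrite med_in by (red; lra); lra ..|].
  exists (med l z r); split; [now apply inI_med_clamp | unfold h in Hz0; lra].
Qed.

Lemma preassociative_prefix p q F x y y' : preassociative p q F ->
  tupI p q x -> tupI p q y -> tupI p q y' -> F y = F y' -> F (x ++ y) = F (x ++ y').
Proof.
  intros PA hx hy hy' e.
  rewrite <- (app_nil_r y), <- (app_nil_r y'); exact (PA x y y' [] hx hy hy' (Forall_nil _) e).
Qed.

Lemma preassociative_suffix p q F y y' z : preassociative p q F ->
  tupI p q y -> tupI p q y' -> tupI p q z -> F y = F y' -> F (y ++ z) = F (y' ++ z).
Proof. intros PA hy hy' hz e; exact (PA [] y y' z (Forall_nil _) hy hy' hz e). Qed.

Lemma F2_cont_l p q F l r y : F2_cont p q F -> p <= l -> r <= q -> inI p q y ->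
  cont_on l r (fun s => F [s; y]).
Proof.
  intros HF hpl hrq hy x hx eps Heps.
  destruct (HF x y (inI_widen _ _ _ _ _ hpl hrq hx) hy eps Heps) as [d [Hd Hxy]].
  exists d; split; [exact Hd|]; intros x' hx' Hx'.
  apply Hxy; [now apply (inI_widen _ _ l r) | exact hy | exact Hx' |].
  rewrite Rminus_diag, Rabs_R0; exact Hd.
Qed.

Lemma F2_cont_r p q F l r x : F2_cont p q F -> p <= l -> r <= q -> inI p q x ->
  cont_on l r (fun s => F [x; s]).
Proof.
  intros HF hpl hrq hx y hy eps Heps.
  destruct (HF x y hx (inI_widen _ _ _ _ _ hpl hrq hy) eps Heps) as [d [Hd Hxy]].
  exists d; split; [exact Hd|]; intros y' hy' Hy'.
  apply Hxy; [exact hx | now apply (inI_widen _ _ l r) | | exact Hy'].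
  rewrite Rminus_diag, Rabs_R0; exact Hd.
Qed.

Section MedianRepresentation.

Variables (p q a b c : R) (F : list R -> R) (f : R -> R).
Hypotheses (hpa : p <= a) (hbq : b <= q).
Hypothesis Hrep : med_repr p q a b F c f.

Let hc : inI a b c := proj1 Hrep.
Let Hf_cont : cont_on a b f := proj1 (proj2 Hrep).
Let Hf_incr : strict_incr_on a b f := proj1 (proj2 (proj2 Hrep)).
Let hab : a <= b := Rle_trans _ _ _ (proj1 hc) (proj2 hc).

Lemma med_repr_tuple l : tupI p q l -> l <> [] ->
  F l = f (med a (med (tmin l) c (tmax l)) b).
Proof.
  destruct l as [|x0 xs]; [contradiction|]; intros hl _.
  exact (proj2 (proj2 (proj2 Hrep)) x0 xs hl).
Qed.

Lemma med_repr_unary x : inI p q x -> F [x] = f (med a x b).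
Proof.
  intros hx; rewrite med_repr_tuple by (discriminate || now apply tupI_1).
  simpl; unfold lmin, lmax; simpl; now rewrite med_xx.
Qed.

Lemma med_repr_binary x y : inI p q x -> inI p q y -> F [x; y] = f (med a (med x c y) b).
Proof.
  intros hx hy; rewrite med_repr_tuple by (discriminate || now apply tupI_2).
  simpl; unfold lmin, lmax; simpl; now rewrite med_min_max.
Qed.

Lemma med_repr_preassociative : standard p q F -> preassociative p q F.
Proof.
  intros Hstd x y y' z hx hy hy' hz e.
  destruct y as [|y0 ys]; [now rewrite (Hstd y' hy' (eq_sym e)) |].
  destruct y' as [|y0' ys']; [discriminate (Hstd _ hy e) |].
  destruct (x ++ z) eqn:Exz; [now apply app_eq_nil in Exz as [-> ->]; rewrite !app_nil_r |].
  assert (Hxz : x ++ z <> []) by (rewrite Exz; discriminate).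
  rewrite !med_repr_tuple in e by (assumption || discriminate).
  apply (strict_incr_inj a b) in e; [| exact Hf_incr | apply inI_med_clamp, hab ..].
  rewrite !med_repr_tuple, !tmin_app_mid, !tmax_app_mid
    by (discriminate || assumption || (apply tupI_app; [| apply tupI_app]; assumption)
        || (destruct x; discriminate)).
  pose proof (tmin_le_tmax (y0 :: ys) ltac:(discriminate)) as Hy.
  pose proof (tmin_le_tmax (y0' :: ys') ltac:(discriminate)) as Hy'.
  f_equal; apply med_hull_congr_r, med_hull_congr_l; try assumption;
    (etransitivity; [apply Rmin_r | assumption]).
Qed.

Lemma med_repr_unarily_qri : unarily_qri p q F.
Proof.
  intros v; split.
  - intros [x [hx e]]; exists [x]; split; [now apply tupI_1 | split; [discriminate | exact e]].
  - intros [l [hl [hne e]]].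
    set (k := med a (med (tmin l) c (tmax l)) b).
    assert (hk : inI a b k) by now apply inI_med_clamp.
    exists k; split; [now apply (inI_widen _ _ a b) |].
    rewrite med_repr_unary, med_in by (try apply (inI_widen p q a b); assumption).
    now rewrite <- e, med_repr_tuple.
Qed.

Lemma med_repr_F2_cont : F2_cont p q F.
Proof.
  intros x1 x2 h1 h2 eps Heps.
  destruct (Hf_cont (med a (med x1 c x2) b) (inI_med_clamp a b _ hab) eps Heps)
    as [d [Hd Hfd]].
  exists d; split; [exact Hd|]; intros y1 y2 hy1 hy2 e1 e2.
  rewrite !med_repr_binary by assumption.
  apply Hfd; [now apply inI_med_clamp |].
  assert (Hd0 : forall r, Rabs (r - r) < d) by (intros; rewrite Rminus_diag, Rabs_R0; exact Hd).
  auto using med_dist_lt.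
Qed.

Lemma med_repr_F2_symmetric : F2_symmetric p q F.
Proof. intros x y hx hy; rewrite !med_repr_binary by assumption; now rewrite (med_sym x c y). Qed.

Lemma med_repr_F2_nondecr : F2_nondecr p q F.
Proof.
  assert (Hmono : forall x y x' y', inI p q x -> inI p q y -> inI p q x' -> inI p q y' ->
            x <= x' -> y <= y' -> F [x; y] <= F [x'; y']).
  { intros x y x' y' hx hy hx' hy' hxx hyy; rewrite !med_repr_binary by assumption.
    apply (strict_incr_le a b); [exact Hf_incr | apply inI_med_clamp, hab .. |].
    auto using med_le_compat, Rle_refl. }
  split; intros; apply Hmono; auto using Rle_refl.
Qed.

Lemma med_repr_F2_idempotent x : inI p q x -> F [x; x] = F [x].
Proof.
  intros hx; rewrite med_repr_binary, med_repr_unary by assumption; now rewrite med_xx.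
Qed.

End MedianRepresentation.

Lemma unarily_qri_pair_value p q a b F f : p <= a -> a <= b -> b <= q ->
  unarily_qri p q F -> (forall x, inI p q x -> F [x] = f (med a x b)) ->
  exists c, inI a b c /\ F [c] = F [a; b].
Proof.
  intros hpa hab hbq U HF1.
  destruct (proj2 (U (F [a; b]))) as [t [ht et]].
  { exists [a; b]; split; [apply tupI_2; red; lra | split; [discriminate | reflexivity]]. }
  assert (hc : inI a b (med a t b)) by now apply inI_med_clamp.
  exists (med a t b); split; [exact hc |].
  rewrite <- et, !HF1, (med_in a b (med a t b))
    by (first [assumption | apply (inI_widen p q a b); assumption]).
  reflexivity.
Qed.

Section Reconstruction.

Variables (p q a b c : R) (F : list R -> R) (f : R -> R).
Hypotheses (hpa : p <= a) (hab : a <= b) (hbq : b <= q).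
Hypothesis PA : preassociative p q F.
Hypothesis Hf_incr : strict_incr_on a b f.
Hypothesis HF1 : forall x, inI p q x -> F [x] = f (med a x b).
Hypothesis HF2_cont : F2_cont p q F.
Hypothesis HF2_sym : F2_symmetric p q F.
Hypothesis HF2_mono : F2_nondecr p q F.
Hypothesis HF2_idem : forall x, inI p q x -> F [x; x] = F [x].
Hypothesis hc : inI a b c.
Hypothesis HFc : F [c] = F [a; b].

Let inI_ab x : inI a b x -> inI p q x := inI_widen p q a b x hpa hbq.
Let ha : inI p q a. Proof. red; lra. Qed.
Let hb : inI p q b. Proof. red; lra. Qed.
Let hc' : inI p q c := inI_ab c hc.

Lemma F1_le x y : inI p q x -> inI p q y -> x <= y -> F [x] <= F [y].
Proof.
  intros hx hy hxy; rewrite !HF1 by assumption.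
  apply (strict_incr_le a b); auto using inI_med_clamp, med_le_compat, Rle_refl.
Qed.

Lemma F2_le x y x' y' : inI p q x -> inI p q y -> inI p q x' -> inI p q y' ->
  x <= x' -> y <= y' -> F [x; y] <= F [x'; y'].
Proof.
  intros; apply Rle_trans with (F [x'; y]); [apply HF2_mono | apply HF2_mono]; assumption.
Qed.

Lemma F1_med_clamp x : inI p q x -> F [x] = F [med a x b].
Proof. intros hx; rewrite !HF1, (med_in a b (med a x b)); auto using inI_med_clamp. Qed.

Lemma F2_lower_c : F [a; c] = F [c].
Proof.
  rewrite HFc; transitivity (F [a; a; b]).
  - exact (preassociative_prefix _ _ _ [a] [c] [a; b] PA
             (tupI_1 _ _ _ ha) (tupI_1 _ _ _ hc') (tupI_2 _ _ _ _ ha hb) HFc).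
  - exact (preassociative_suffix _ _ _ [a; a] [a] [b] PA
             (tupI_2 _ _ _ _ ha ha) (tupI_1 _ _ _ ha) (tupI_1 _ _ _ hb) (HF2_idem a ha)).
Qed.

Lemma F2_upper_c : F [c; b] = F [c].
Proof.
  rewrite HFc; transitivity (F [a; b; b]).
  - exact (preassociative_suffix _ _ _ [c] [a; b] [b] PA
             (tupI_1 _ _ _ hc') (tupI_2 _ _ _ _ ha hb) (tupI_1 _ _ _ hb) HFc).
  - exact (preassociative_prefix _ _ _ [a] [b; b] [b] PA
             (tupI_1 _ _ _ ha) (tupI_2 _ _ _ _ hb hb) (tupI_1 _ _ _ hb) (HF2_idem b hb)).
Qed.

(* The IVT gives s with F(a, s) = F(y), and then F(a, y) = F(a, a, s) = F(a, s). *)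
Lemma F2_absorb_lower y : inI a c y -> F [a; y] = F [y].
Proof.
  intros hy.
  destruct (ivt_on a c (fun s => F [a; s]) (F [y])) as [s [hs es]]; simpl.
  - bounds.
  - apply (F2_cont_r p q); auto; bounds.
  - rewrite HF2_idem, F2_lower_c by exact ha; split; apply F1_le; bounds.
  - assert (hs' : inI p q s) by bounds.
    assert (hy' : inI p q y) by bounds.
    transitivity (F [a; a; s]).
    + symmetry; exact (preassociative_prefix _ _ _ [a] [a; s] [y] PA
        (tupI_1 _ _ _ ha) (tupI_2 _ _ _ _ ha hs') (tupI_1 _ _ _ hy') es).
    + rewrite <- es; exact (preassociative_suffix _ _ _ [a; a] [a] [s] PA
        (tupI_2 _ _ _ _ ha ha) (tupI_1 _ _ _ ha) (tupI_1 _ _ _ hs') (HF2_idem a ha)).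
Qed.

Lemma F2_absorb_upper x : inI c b x -> F [x; b] = F [x].
Proof.
  intros hx.
  destruct (ivt_on c b (fun s => F [s; b]) (F [x])) as [s [hs es]]; simpl.
  - bounds.
  - apply (F2_cont_l p q); auto; bounds.
  - rewrite HF2_idem, F2_upper_c by exact hb; split; apply F1_le; bounds.
  - assert (hs' : inI p q s) by bounds.
    assert (hx' : inI p q x) by bounds.
    transitivity (F [s; b; b]).
    + symmetry; exact (preassociative_suffix _ _ _ [s; b] [x] [b] PA
        (tupI_2 _ _ _ _ hs' hb) (tupI_1 _ _ _ hx') (tupI_1 _ _ _ hb) es).
    + rewrite <- es; exact (preassociative_prefix _ _ _ [s] [b; b] [b] PA
        (tupI_1 _ _ _ hs') (tupI_2 _ _ _ _ hb hb) (tupI_1 _ _ _ hb) (HF2_idem b hb)).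
Qed.

Lemma F2_med_sorted x y : inI a b x -> inI a b y -> x <= y -> F [x; y] = F [med x c y].
Proof.
  intros hx hy hxy.
  destruct (Rle_dec y c) as [hyc|hyc]; [|destruct (Rle_dec c x) as [hcx|hcx]].
  - rewrite med_right by bounds; apply Rle_antisym.
    + rewrite <- (HF2_idem y) by bounds; apply F2_le; bounds.
    + rewrite <- F2_absorb_lower by bounds; apply F2_le; bounds.
  - rewrite med_left by bounds; apply Rle_antisym.
    + rewrite <- F2_absorb_upper by bounds; apply F2_le; bounds.
    + rewrite <- (HF2_idem x) by bounds; apply F2_le; bounds.
  - rewrite med_mid by bounds; apply Rle_antisym.
    + rewrite <- F2_upper_c; apply F2_le; bounds.
    + rewrite <- F2_lower_c; apply F2_le; bounds.
Qed.

Lemma F2_med x y : inI p q x -> inI p q y -> F [x; y] = F [med x c y].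
Proof.
  intros hx hy.
  set (x' := med a x b); set (y' := med a y b).
  assert (hx' : inI a b x') by now apply inI_med_clamp.
  assert (hy' : inI a b y') by now apply inI_med_clamp.
  transitivity (F [x'; y']).
  { transitivity (F [x'; y]).
    - exact (preassociative_suffix _ _ _ [x] [x'] [y] PA (tupI_1 _ _ _ hx)
        (tupI_1 _ _ _ (inI_ab _ hx')) (tupI_1 _ _ _ hy) (F1_med_clamp x hx)).
    - exact (preassociative_prefix _ _ _ [x'] [y] [y'] PA (tupI_1 _ _ _ (inI_ab _ hx'))
        (tupI_1 _ _ _ hy) (tupI_1 _ _ _ (inI_ab _ hy')) (F1_med_clamp y hy)). }
  assert (Hsorted : F [x'; y'] = F [med x' c y']).
  { destruct (Rle_dec x' y').
    - now apply F2_med_sorted.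
    - rewrite HF2_sym, med_sym by auto; apply F2_med_sorted; auto; lra. }
  rewrite Hsorted, !HF1 by (apply inI_med; auto).
  unfold x', y'; now rewrite <- med_clamp_args.
Qed.

Lemma F_med_hull x0 xs : tupI p q (x0 :: xs) ->
  F (x0 :: xs) = F [med (lmin x0 xs) c (lmax x0 xs)].
Proof.
  revert x0; induction xs as [|x1 xs IH]; intros x0 hl.
  - unfold lmin, lmax; simpl; now rewrite med_xx.
  - inversion hl as [|? ? hx0 hl1]; inversion hl1 as [|? ? hx1 hxs]; subst.
    assert (hm : inI p q (med x0 c x1)) by now apply inI_med.
    transitivity (F (med x0 c x1 :: xs)).
    { exact (preassociative_suffix _ _ _ [x0; x1] [med x0 c x1] xs PA
        (tupI_2 _ _ _ _ hx0 hx1) (tupI_1 _ _ _ hm) hxs (F2_med x0 x1 hx0 hx1)). }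
    rewrite IH by now constructor.
    change (lmin x0 (x1 :: xs)) with (lmin (Rmin x0 x1) xs).
    change (lmax x0 (x1 :: xs)) with (lmax (Rmax x0 x1) xs).
    destruct xs as [|y ys].
    + unfold lmin, lmax; simpl; now rewrite med_xx, med_min_max.
    + now rewrite !lmin_cons, !lmax_cons, med_hull_absorb.
Qed.

End Reconstruction.

Lemma med_repr_of_properties p q a b F f : p <= a -> a <= b -> b <= q ->
  preassociative p q F -> unarily_qri p q F ->
  cont_on a b f -> strict_incr_on a b f -> (forall x, inI p q x -> F [x] = f (med a x b)) ->
  F2_cont p q F -> F2_symmetric p q F -> F2_nondecr p q F ->
  (forall x, inI p q x -> F [x; x] = F [x]) ->
  exists c, med_repr p q a b F c f.
Proof.
  intros hpa hab hbq PA U Hf_cont Hf_incr HF1 HC HS HN HI.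
  destruct (unarily_qri_pair_value p q a b F f) as [c [hc HFc]]; auto.
  exists c; refine (conj hc (conj Hf_cont (conj Hf_incr _))); intros x0 xs hl.
  rewrite (F_med_hull p q a b c F f), HF1; auto.
  apply inI_med; [| now apply (inI_widen p q a b) |];
    [apply (inI_tmin p q (x0 :: xs)) | apply (inI_tmax p q (x0 :: xs))]; easy.
Qed.

Theorem corollary5p9 (p q a b : R) (F : list R -> R) :
  p <= a -> a <= b -> b <= q ->
  standard p q F ->
  ((preassociative p q F /\ unarily_qri p q F /\
    (exists f : R -> R, cont_on a b f /\ strict_incr_on a b f /\
       forall x, inI p q x -> F [x] = f (med a x b)) /\
    F2_cont p q F /\ F2_symmetric p q F /\ F2_nondecr p q F /\
    (forall x, inI p q x -> F [x; x] = F [x]))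
   <->
   (exists (c : R) (f : R -> R), med_repr p q a b F c f))
  /\
  (forall (c : R) (f : R -> R), med_repr p q a b F c f ->
     forall x, inI a b x -> f x = F [x]).
Proof.
  intros hpa hab hbq Hstd; split; [split|].
  - intros (PA & U & (f & Hf_cont & Hf_incr & HF1) & HC & HS & HN & HI).
    destruct (med_repr_of_properties p q a b F f) as [c Hrep]; auto.
    now exists c, f.
  - intros [c [f Hrep]]; pose proof Hrep as (_ & Hf_cont & Hf_incr & _).
    refine (conj (med_repr_preassociative p q a b c F f Hrep Hstd)
           (conj (med_repr_unarily_qri p q a b c F f hpa hbq Hrep)
           (conj _
           (conj (med_repr_F2_cont p q a b c F f Hrep)
           (conj (med_repr_F2_symmetric p q a b c F f Hrep)
           (conj (med_repr_F2_nondecr p q a b c F f Hrep)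
                 (med_repr_F2_idempotent p q a b c F f Hrep))))))).
    exists f; exact (conj Hf_cont (conj Hf_incr (med_repr_unary p q a b c F f Hrep))).
  - intros c f Hrep x hx.
    rewrite (med_repr_unary p q a b c F f Hrep), med_in
      by (first [exact hx | apply (inI_widen p q a b); assumption]).
    reflexivity.
Qed.
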